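(* Let $d\ge 1$ and let $G$ be a twin-free graph with $n$ vertices whose VC-dimension is at most $d$. Then every identifying code $C$ of $G$ satisfies $|C|\ge (n-1)^{1/d}$.
   Context: For $v\in V(G)$, $N[v]$ is the closed neighbourhood of $v$. An identifying code of $G$ is a set $C\subseteq V(G)$ such that $N[v]\cap C\neq\emptyset$ for all $v$ and $N[u]\cap C\neq N[v]\cap C$ for all distinct $u,v$. $G$ is twin-free if no two distinct vertices have the same closed neighbourhood. A set $X\subseteq V(G)$ is shattered if for every $S\subseteq X$ there is a vertex $v$ with $N[v]\cap X=S$; the VC-dimension of $G$ is the largest size of a shattered set. *)

From mathcomp Require Import all_boot.
Set Implicit Arguments. Unset Strict Implicit. Unset Printing Implicit Defensive.

Definition simple_graph (T : finType) (e : rel T) : Prop :=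
  symmetric e /\ irreflexive e.

Definition cnbh (T : finType) (e : rel T) (v : T) : {set T} :=
  v |: [set u | e v u].

Definition twin_free (T : finType) (e : rel T) : Prop :=
  forall u v : T, u != v -> cnbh e u != cnbh e v.

Definition identifying_code (T : finType) (e : rel T) (C : {set T}) : Prop :=
  (forall v : T, cnbh e v :&: C != set0) /\
  (forall u v : T, u != v -> cnbh e u :&: C != cnbh e v :&: C).

Definition shattered (T : finType) (e : rel T) (X : {set T}) : Prop :=
  forall S : {set T}, S \subset X -> exists v : T, cnbh e v :&: X = S.

Definition vc_dim_le (T : finType) (e : rel T) (d : nat) : Prop :=
  forall X : {set T}, shattered e X -> #|X| <= d.

(* The traces N[v] ∩ C of the closed neighbourhoods on an identifying code C
   are pairwise distinct, so they form a family of #|T| subsets of C.  Every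
   set shattered by this family is shattered by G, hence has at most d
   elements, and the Sauer-Shelah lemma bounds the family by
   \sum_(i <= d) 'C(#|C|, i), which is at most #|C| ^ d + 1 once d >= 1. *)

From mathcomp Require Import all_boot zify.
Set Implicit Arguments. Unset Strict Implicit. Unset Printing Implicit Defensive.

Lemma sum_bin_recS n d :
  \sum_(i < d.+2) 'C(n.+1, i) = \sum_(i < d.+2) 'C(n, i) + \sum_(i < d.+1) 'C(n, i).
Proof.
rewrite big_ord_recl [in RHS]big_ord_recl !bin0 -addnA; congr (_ + _).
by rewrite -big_split; apply: eq_bigr => i _; rewrite binS.
Qed.

Lemma expn_add_expn_pred_le m d : 2 <= d -> m ^ d + m ^ d.-1 + 1 <= m.+1 ^ d.
Proof.
elim: d => [|[|[|d]] IH] // _; first by rewrite !expnS !expn0; nia.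
by have := IH isT; rewrite /= !expnS; nia.
Qed.

Lemma sum_bin_le_expn_add1 n d : 0 < d -> \sum_(i < d.+1) 'C(n, i) <= n ^ d + 1.
Proof.
elim: n d => [|n IH] [|d] // _.
  by rewrite big_ord_recl bin0 big1 ?exp0n // => i _; rewrite bin0n.
rewrite sum_bin_recS; case: d => [|d].
  by rewrite !big_ord_recl !big_ord0 !bin0 !bin1 expn1; lia.
have := IH d.+2 isT; have := IH d.+1 isT.
by have := @expn_add_expn_pred_le n d.+2 isT; rewrite /=; lia.
Qed.

Section Shattering.

Variable T : finType.
Implicit Types (x : T) (A B S X : {set T}) (F : {set {set T}}).

Definition shatters F X : Prop :=
  forall S, S \subset X -> exists2 B, B \in F & B :&: X = S.

Definition paired_at x F := [set B in F | (x \notin B) && (x |: B \in F)].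

Lemma card_le_del_paired x F :
  #|F| <= #|[set B :\ x | B in F]| + #|paired_at x F|.
Proof.
have paired_sub : paired_at x F \subset F by apply/subsetP => B; rewrite inE => /andP[].
rewrite -(cardsID (paired_at x F) F) (setIidPr paired_sub) addnC leq_add2r.
have join_paired B B' : B \in F -> B' \in F -> x \notin B -> x \in B' ->
    B :\ x = B' :\ x -> B \in paired_at x F.
  move=> BF B'F xB xB' eqBB'; rewrite inE BF xB; suff -> : x |: B = B' by [].
  apply/setP => y; rewrite in_setU1; case: (eqVneq y x) => [-> // | neq_yx].
  by move/setP: eqBB' => /(_ y); rewrite !inE neq_yx.
have del_inj : {in F :\: paired_at x F &, injective (fun B => B :\ x)}.
  move=> B B'; rewrite !in_setD => /andP[nB BF] /andP[nB' B'F] eqBB'.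
  case: (boolP (x \in B)) => xB; case: (boolP (x \in B')) => xB'.
  - by rewrite -(setD1K xB) -(setD1K xB') eqBB'.
  - by rewrite (join_paired _ _ B'F BF xB' xB (esym eqBB')) in nB'.
  - by rewrite (join_paired _ _ BF B'F xB xB' eqBB') in nB.
  - apply/setP => y; case: (eqVneq y x) => [-> | neq_yx]; first by rewrite (negbTE xB) (negbTE xB').
    by move/setP: eqBB' => /(_ y); rewrite !inE neq_yx.
rewrite -(card_in_imset del_inj); apply/subset_leq_card/imsetS/subsetDl.
Qed.

Lemma shatters_del x F X :
  x \notin X -> shatters [set B :\ x | B in F] X -> shatters F X.
Proof.
move=> xX shX S SX; have [_ /imsetP[B BF ->] <-] := shX S SX.
exists B => //; apply/setP => y; rewrite !inE.
by case: (eqVneq y x) => [-> | //]; rewrite (negbTE xX) andbF.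
Qed.

Lemma shatters_paired x F X :
  x \notin X -> shatters (paired_at x F) X -> shatters F (x |: X).
Proof.
move=> xX shX S SxX.
have SX : S :\ x \subset X by rewrite subDset.
have [B] := shX _ SX; rewrite inE => /andP[BF /andP[xB xBF]] traceB.
case: (boolP (x \in S)) => xS.
  by exists (x |: B) => //; rewrite -setUIr traceB setD1K.
exists B => //; apply/setP => y; rewrite !inE.
case: (eqVneq y x) => [-> | neq_yx] /=; first by rewrite (negbTE xB) (negbTE xS).
by move/setP: traceB => /(_ y); rewrite !inE neq_yx.
Qed.

Lemma sauer_shelah d A F :
  (forall B, B \in F -> B \subset A) ->
  (forall X, X \subset A -> shatters F X -> #|X| <= d) ->
  #|F| <= \sum_(i < d.+1) 'C(#|A|, i).
Proof.
move cardA : #|A| => n; elim: n d A F cardA => [|n IH] d A F cardA sub_FA vcF.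
  have A0 : A = set0 by apply/eqP; rewrite -cards_eq0 cardA.
  have : F \subset [set set0].
    by apply/subsetP => B /sub_FA; rewrite A0 subset0 in_set1.
  move/subset_leq_card; rewrite cards1 => /leq_trans; apply.
  by rewrite big_ord_recl bin0 leq_addr.
have [x xA] : exists x, x \in A by apply/card_gt0P; rewrite cardA.
have cardA' : #|A :\ x| = n by move: cardA; rewrite (cardsD1 x A) xA add1n => -[].
have xX X : X \subset A :\ x -> x \notin X.
  by move=> XA'; apply/negP => /(subsetP XA'); rewrite !inE eqxx.
have subA X : X \subset A :\ x -> X \subset A.
  by move/subset_trans; apply; apply: subD1set.
have subxA X : X \subset A :\ x -> x |: X \subset A.
  by move=> XA'; rewrite subUset sub1set xA subA.
have le_del : #|[set B :\ x | B in F]| <= \sum_(i < d.+1) 'C(n, i).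
  apply: IH cardA' _ _ => [_ /imsetP[B BF ->] | X XA' shX].
    by rewrite setSD ?sub_FA.
  exact: vcF (subA _ XA') (shatters_del (xX _ XA') shX).
have paired_subA' B : B \in paired_at x F -> B \subset A :\ x.
  by rewrite inE subsetD1 => /andP[/sub_FA -> /andP[]].
apply: leq_trans (card_le_del_paired x F) _.
case: d vcF le_del => [|d] vcF le_del.
  rewrite !big_ord1 !bin0 in le_del *; rewrite -[1]addn0 leq_add // leqn0 cards_eq0.
  apply/set0Pn => -[B pB].
  have : shatters F (x |: set0).
    apply: shatters_paired; rewrite ?inE // => S; rewrite subset0 => /eqP ->.
    by exists B; rewrite ?setI0.
  by move/(vcF _ (subxA _ (sub0set _))); rewrite setU0 cards1.
rewrite sum_bin_recS leq_add //; apply: IH cardA' paired_subA' _ => X XA' shX.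
by have := vcF _ (subxA _ XA') (shatters_paired (xX _ XA') shX); rewrite cardsU1 xX.
Qed.

End Shattering.

Theorem mainTheorem2 (T : finType) (e : rel T) (d : nat) (C : {set T}) :
  simple_graph e -> 1 <= d -> twin_free e -> vc_dim_le e d ->
  identifying_code e C ->
  #|T| - 1 <= #|C| ^ d.
Proof.
move=> _ d_gt0 _ vcG [_ separating].
set F := [set cnbh e v :&: C | v in T].
have cardF : #|F| = #|T|.
  apply: card_in_imset => u v _ _ eq_uv.
  exact: contra_eq (separating u v) eq_uv.
have shatters_vc (X : {set T}) : X \subset C -> shatters F X -> #|X| <= d.
  move=> XC shX; apply: vcG => S SX.
  have [_ /imsetP[v _ ->] <-] := shX S SX.
  by exists v; rewrite -setIA (setIidPr XC).
have traces_subC B : B \in F -> B \subset C by move=> /imsetP[v _ ->]; apply: subsetIr.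
have := sauer_shelah traces_subC shatters_vc.
by rewrite cardF => /leq_trans/(_ (sum_bin_le_expn_add1 _ d_gt0)); lia.
Qed.
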